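(* Let $A\subseteq\Delta^{m-1}\times\Delta^{n-1}$, let $\mathscr T$ be a triangulation of $A$, and let $\sigma\in\mathscr T$. Then there exists $\tau\in\mathscr T$ with $\sigma\subseteq\tau$ such that every $f\in\Delta^{n-1}$ which is adjacent in $G(A)$ to some vertex of $G(\sigma)$ is also adjacent in $G(\tau)$ to some vertex of $G(\sigma)$. The same holds with the roles of $\Delta^{m-1}$ and $\Delta^{n-1}$ exchanged (i.e. for $e\in\Delta^{m-1}$ in place of $f$).
   Context: For a finite point set $A\subset\mathbb R^d$: a cell is a subset of $A$; a simplex is an affinely independent cell; a face of a cell $C$ is a subset $F\subseteq C$ which is the set of minimizers on $C$ of some linear functional. A triangulation of $A$ is a collection $\mathscr T$ of simplices of $A$, closed under taking faces, such that for all $\sigma,\sigma'\in\mathscr T$, $\mathrm{conv}(\sigma)\cap\mathrm{conv}(\sigma')=\mathrm{conv}(F)$ for a common face $F$ of $\sigma$ and $\sigma'$, and such that $\bigcup_{\sigma\in\mathscr T}\mathrm{conv}(\sigma)=\mathrm{conv}(A)$. $\Delta^{m-1}=\{e_1,\dots,e_m\}$ and $\Delta^{n-1}=\{f_1,\dots,f_n\}$ are the standard bases of $\mathbb R^m$ and $\mathbb R^n$, and $\Delta^{m-1}\times\Delta^{n-1}:=\{(e_i,f_j)\}\subset\mathbb R^m\times\mathbb R^n$. Let $K$ be the complete bipartite graph on $\Delta^{m-1}\cup\Delta^{n-1}$ with edges $e_if_j$. For $C\subseteq\Delta^{m-1}\times\Delta^{n-1}$, $G(C)$ is the minimal subgraph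 of $K$ with edge set $\{e_if_j:(e_i,f_j)\in C\}$. *)

(* Points of Delta^{m-1} x Delta^{n-1} live in R^m x R^n = R^(m+n),
   encoded as row vectors 'rV[R]_(m+n); R is an arbitrary ordered (real) field. *)
From HB Require Import structures.
From mathcomp Require Import all_boot all_order all_algebra.
Set Implicit Arguments. Unset Strict Implicit. Unset Printing Implicit Defensive.
Import Order.TTheory GRing.Theory Num.Theory.
Local Open Scope ring_scope.

Section Defs.
Variables (R : realFieldType) (m n : nat).

(* index (i,j) stands for the point (e_i, f_j) *)
Definition idx := ('I_m * 'I_n)%type.

Definition pt (p : idx) : 'rV[R]_(m + n) :=
  \row_k (match split k with
          | inl i => (i == p.1)%:R
          | inr j => (j == p.2)%:R
          end).

Definition lfun (w x : 'rV[R]_(m + n)) : R := \sum_k w 0 k * x 0 k.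

Definition in_conv (S : {set idx}) (x : 'rV[R]_(m + n)) : Prop :=
  exists lam : idx -> R,
    (forall p, 0 <= lam p) /\ \sum_(p in S) lam p = 1 /\
    x = \sum_(p in S) lam p *: pt p.

Definition simplex (S : {set idx}) : Prop :=
  forall lam : idx -> R,
    \sum_(p in S) lam p *: pt p = 0 -> \sum_(p in S) lam p = 0 ->
    forall p, p \in S -> lam p = 0.

(* F is a face of C: the set of minimizers on C of some linear functional
   (the empty set is also counted as a face) *)
Definition face (F C : {set idx}) : Prop :=
  F = set0 \/
  exists w : 'rV[R]_(m + n),
    F = [set p in C | [forall q in C, lfun w (pt p) <= lfun w (pt q)]].

Definition triangulation (A : {set idx}) (T : {set {set idx}}) : Prop :=
  [/\ (forall s, s \in T -> s \subset A /\ simplex s),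
      (forall s F, s \in T -> face F s -> F \in T),
      (forall s s', s \in T -> s' \in T ->
         exists F, [/\ face F s, face F s' &
           forall x, (in_conv s x /\ in_conv s' x) <-> in_conv F x])
    & (forall x, (exists2 s, s \in T & in_conv s x) <-> in_conv A x)].

End Defs.

(* The graph G(C): vertices e_i = inl i, f_j = inr j; edge e_i f_j iff (i,j) \in C. *)
Section Graph.
Variables (m n : nat).
Definition gvertex := ('I_m + 'I_n)%type.

Definition Gadj (C : {set ('I_m * 'I_n)}) (u v : gvertex) : bool :=
  match u, v with
  | inl i, inr j => (i, j) \in C
  | inr j, inl i => (i, j) \in C
  | _, _ => false
  end.

(* v is a vertex of the minimal subgraph G(C), i.e. incident to an edge of C *)
Definition Gvert (C : {set ('I_m * 'I_n)}) (v : gvertex) : bool :=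
  [exists u : gvertex, Gadj C v u].
End Graph.

From HB Require Import structures.
From mathcomp Require Import all_boot all_order all_algebra.
From mathcomp Require Import ring lra.
From Stdlib Require Import Classical.
Import Order.TTheory GRing.Theory Num.Theory.
Set Implicit Arguments. Unset Strict Implicit. Unset Printing Implicit Defensive.
Local Open Scope ring_scope.

(* Let b be the barycenter of sigma and y the barycenter of the points (e_i, f_j)
   of A with e_i a vertex of G(sigma).  Each simplex of T either contains b, and
   then contains sigma (b lies in the relative interior of sigma, so the common
   face of the two simplices must be sigma itself), or misses an initial piece of
   the ray from b towards y (convex hulls are closed).  T being finite, a point
   x = b + t (y - b) with small t > 0 lies in some tau containing sigma.  The
   f_j-coordinate of x is positive for every f_j adjacent in G(A) to G(sigma),
   so some vertex (e_i, f_j) of tau has positive weight; then the e_i-coordinate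
   of x is positive, which forces e_i to be a vertex of G(sigma). *)

Section Triangulations.
Variables (R : realFieldType) (m n : nat).
Local Notation idx := (idx m n).
Local Notation vec := 'rV[R]_(m + n).
Local Notation pt := (@pt R m n).
Local Notation in_conv := (@in_conv R m n).
Local Notation simplex := (@simplex R m n).
Implicit Types (S A F : {set idx}) (b d x y : vec).

Definition affine_coords S (lam : idx -> R) x :=
  \sum_(p in S) lam p = 1 /\ x = \sum_(p in S) lam p *: pt p.

Lemma sum_if_subset (V : nmodType) S A (G : idx -> V) : S \subset A ->
  \sum_(p in A) (if p \in S then G p else 0) = \sum_(p in S) G p.
Proof.
move=> sSA; rewrite -big_mkcondr; apply: eq_bigl => p.
by rewrite andb_idl // => /(subsetP sSA).
Qed.

Lemma affine_coords_widen S A lam x : S \subset A -> affine_coords S lam x ->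
  affine_coords A (fun p => if p \in S then lam p else 0) x.
Proof.
move=> sSA [lam1 ->]; split; first by rewrite sum_if_subset.
rewrite -(sum_if_subset _ sSA); apply: eq_bigr => p _.
by case: ifP => _ //; rewrite scale0r.
Qed.

Lemma in_conv_subset S A x : S \subset A -> in_conv S x -> in_conv A x.
Proof.
move=> sSA [lam [lam0 hx]]; exists (fun p => if p \in S then lam p else 0).
by split; [move=> p; case: ifP | exact: affine_coords_widen].
Qed.

Lemma in_conv_restrict S lam x :
  {in S, forall p, 0 <= lam p} -> affine_coords S lam x -> in_conv S x.
Proof.
move=> lam0 [lam1 ->]; exists (fun p => if p \in S then lam p else 0); split.
  by move=> p; case: ifP => // /lam0.
by split; [rewrite -lam1 | ]; apply: eq_bigr => p ->.
Qed.

Lemma in_conv_set0 x : ~ in_conv set0 x.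
Proof. by case=> lam [_ []]; rewrite big_set0 => /eqP; rewrite eq_sym oner_eq0. Qed.

Lemma affine_coords_comb S a c u v r :
  affine_coords S a u -> affine_coords S c v ->
  affine_coords S (fun p => (1 - r) * a p + r * c p) ((1 - r) *: u + r *: v).
Proof.
move=> [a1 ->] [c1 ->]; split.
  by rewrite big_split /= -!mulr_sumr a1 c1 !mulr1 subrK.
rewrite !scaler_sumr -big_split; apply: eq_bigr => p _.
by rewrite [RHS]scalerDl !scalerA.
Qed.

Lemma in_conv_segment S u v r : in_conv S u -> in_conv S v -> 0 <= r <= 1 ->
  in_conv S ((1 - r) *: u + r *: v).
Proof.
move=> [a [a0 hu]] [c [c0 hv]] /andP[r0 r1].
exists (fun p => (1 - r) * a p + r * c p); split; last exact: affine_coords_comb.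
by move=> p; rewrite addr_ge0 // mulr_ge0 // subr_ge0.
Qed.

Lemma simplex_coords_uniq S a c x : simplex S ->
  affine_coords S a x -> affine_coords S c x -> {in S, a =1 c}.
Proof.
move=> hS [a1 ->] [c1 e] p pS; apply/eqP; rewrite -subr_eq0; apply/eqP.
apply: (hS (fun p => a p - c p)) => //; last by rewrite sumrB a1 c1 subrr.
under eq_bigr do rewrite scalerBl.
by rewrite sumrB e subrr.
Qed.

Lemma ray_comb b d r t1 t2 :
  (1 - r) *: (b + t1 *: d) + r *: (b + t2 *: d) = b + ((1 - r) * t1 + r * t2) *: d.
Proof. by rewrite !scalerDr !scalerA addrACA -scalerDl subrK scale1r scalerDl. Qed.

Lemma segment_ray b y t : (1 - t) *: b + t *: y = b + t *: (y - b).
Proof. by rewrite scalerBl scale1r scalerBr addrA addrAC. Qed.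

Lemma in_conv_ray_lim S b d : simplex S ->
  (forall e, 0 < e -> exists2 t, 0 < t < e & in_conv S (b + t *: d)) ->
  in_conv S b.
Proof.
(* The coordinates [mu] of [b] are extrapolated from two points of the ray; a
   negative one would remain negative at points of the ray close to [b], against
   uniqueness of coordinates in a simplex. *)
move=> hS near_b.
have [t1 /andP[t1p _] [l1 [_ h1]]] := near_b 1 ltr01.
have [t2 /andP[t2p t21] [l2 [l20 h2]]] := near_b t1 t1p.
pose r := t1 / (t1 - t2); pose mu p := (1 - r) * l1 p + r * l2 p.
have hmu : affine_coords S mu b.
  have r0 : (1 - r) * t1 + r * t2 = 0.
    by rewrite /r; field; rewrite subr_eq0 gt_eqF.
  have -> : b = (1 - r) *: (b + t1 *: d) + r *: (b + t2 *: d).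
    by rewrite ray_comb r0 scale0r addr0.
  exact: affine_coords_comb.
have [/forall_inP mu0 | /forall_inPn [p pS]] := boolP [forall p in S, 0 <= mu p].
  exact: in_conv_restrict hmu.
rewrite -ltNge => mup.
have gap : 0 < l2 p - mu p by rewrite subr_gt0 (lt_le_trans mup).
have e3 : 0 < t2 * - mu p / (l2 p - mu p) by rewrite divr_gt0 // mulr_gt0 // oppr_gt0.
have [t3 /andP[t3p t3s] [l3 [l30 h3]]] := near_b _ e3.
pose r' := t3 / t2.
have h3' : affine_coords S (fun q => (1 - r') * mu q + r' * l2 q) (b + t3 *: d).
  have -> : b + t3 *: d = (1 - r') *: (b + 0 *: d) + r' *: (b + t2 *: d).
    by rewrite ray_comb /r' mulr0 add0r divfK ?gt_eqF.
  by rewrite scale0r addr0; apply: affine_coords_comb.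
have := l30 p; rewrite (simplex_coords_uniq hS h3 h3' pS).
have E : ((1 - r') * mu p + r' * l2 p) * t2 = t2 * mu p + t3 * (l2 p - mu p).
  by rewrite /r'; field; rewrite gt_eqF.
rewrite -(pmulr_lge0 _ t2p) E.
rewrite ltr_pdivlMr // mulrN in t3s.
lra.
Qed.

Lemma ray_leaves_conv S b d : simplex S -> ~ in_conv S b ->
  exists2 e, 0 < e & forall t, 0 < t < e -> ~ in_conv S (b + t *: d).
Proof.
move=> hS nb; apply: NNPP => ne; apply/nb/(@in_conv_ray_lim _ _ d hS) => e e0.
by apply: NNPP => nt; apply: ne; exists e => // t te ht; apply: nt; exists t.
Qed.

Lemma face_subset F C : face R F C -> F = set0 \/ F \subset C.
Proof.
case=> [->|[w ->]]; [by left | right].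
by apply/subsetP => p; rewrite inE => /andP[].
Qed.

Definition barycenter S : vec := \sum_(p in S) (#|S|%:R^-1 : R) *: pt p.

Lemma barycenter_coords S : S != set0 ->
  affine_coords S (fun _ => #|S|%:R^-1) (barycenter S).
Proof.
move=> S0; split => //.
by rewrite sumr_const -[LHS]mulr_natr mulVf // pnatr_eq0 -lt0n card_gt0.
Qed.

Lemma in_conv_barycenter S : S != set0 -> in_conv S (barycenter S).
Proof.
move=> S0; exists (fun _ => #|S|%:R^-1); split; last exact: barycenter_coords.
by move=> _; rewrite invr_ge0.
Qed.

Lemma barycenter_in_conv_subset S F : simplex S -> F \subset S -> S != set0 ->
  in_conv F (barycenter S) -> S \subset F.
Proof.
move=> hS sFS S0 [mu [_ hmu]]; apply/subsetP => p pS; apply: contraT => pF.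
have := simplex_coords_uniq hS (barycenter_coords S0) (affine_coords_widen sFS hmu) pS.
rewrite /= (negbTE pF) => /eqP.
by rewrite invr_eq0 pnatr_eq0 cards_eq0 (negbTE S0).
Qed.

Lemma triangulation_barycenter_subset A T s tau : triangulation R A T ->
  s \in T -> tau \in T -> s != set0 -> in_conv tau (barycenter s) -> s \subset tau.
Proof.
case=> hT _ hcap _ sT tT s0 hb.
have [F [Fs Ft capF]] := hcap _ _ sT tT.
have bF := (capF _).1 (conj (in_conv_barycenter s0) hb).
have [F0|sFs] := face_subset Fs; first by move: bF; rewrite F0 => /in_conv_set0.
have [F0|sFt] := face_subset Ft; first by move: bF; rewrite F0 => /in_conv_set0.
exact: subset_trans (barycenter_in_conv_subset (hT _ sT).2 sFs s0 bF) sFt.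
Qed.

Lemma near0_forall (X : finType) (P : X -> R -> Prop) :
  (forall i, exists2 e, 0 < e & forall t, 0 < t < e -> P i t) ->
  exists2 e, 0 < e & forall i t, 0 < t < e -> P i t.
Proof.
move=> hP; suff [e e0 he] : exists2 e, 0 < e &
    forall i, i \in enum X -> forall t, 0 < t < e -> P i t.
  by exists e => // i; apply: he; rewrite mem_enum.
elim: (enum X) => [|i L [e e0 he]]; first by exists 1.
have [ei ei0 hi] := hP i.
exists (Order.min ei e) => [|j]; first by rewrite lt_min ei0 e0.
rewrite inE => /predU1P[->|jL] t /andP[t0]; rewrite lt_min => /andP[ti te].
  by apply: hi; rewrite t0.
by apply: he; rewrite ?t0.
Qed.

Lemma triangulation_ray_start A T s y : triangulation R A T -> s \in T ->
  s != set0 -> in_conv A y ->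
  exists2 tau, tau \in T & s \subset tau /\
    exists2 t, 0 < t <= 1 & in_conv tau ((1 - t) *: barycenter s + t *: y).
Proof.
move=> hT sT s0 yA; have [hsimp _ _ hcover] := hT.
set b := barycenter s.
have near_b tau : exists2 e, 0 < e & forall t, 0 < t < e ->
    tau \in T -> in_conv tau ((1 - t) *: b + t *: y) -> s \subset tau.
  have [tT|] := boolP (tau \in T); last by exists 1 => // t _ /negP.
  have [hb | nb] := classic (in_conv tau b).
    by exists 1 => // *; apply: triangulation_barycenter_subset hT sT tT s0 hb.
  have [e e0 he] := ray_leaves_conv (y - b) (hsimp _ tT).2 nb.
  by exists e => // t te _; rewrite segment_ray => /(he _ te).
have [e e0 he] := near0_forall near_b.
pose t := Order.min e 1 / 2.
have m0 : 0 < Order.min e 1 by rewrite lt_min e0 ltr01.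
have me : Order.min e 1 <= e by rewrite ge_min lexx.
have m1 : Order.min e 1 <= 1 by rewrite ge_min lexx orbT.
have [t0 te t1] : [/\ 0 < t, t < e & t <= 1] by rewrite /t; split; lra.
have bA := in_conv_subset (hsimp _ sT).1 (in_conv_barycenter s0).
have t01 : 0 <= t <= 1 by rewrite ltW.
have [tau tT htau] := (hcover _).2 (in_conv_segment bA yA t01).
exists tau => //; split; last by exists t; rewrite ?t0.
by apply: he htau => //; rewrite t0.
Qed.

Lemma pt_ge0 p k : 0 <= pt p 0 k.
Proof. by rewrite mxE; case: split => ?; apply: ler0n. Qed.

Lemma pt_lshift p (i : 'I_m) : pt p 0 (lshift n i) = (i == p.1)%:R.
Proof. by rewrite mxE (unsplitK (inl i : 'I_m + 'I_n)). Qed.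

Lemma pt_rshift p (j : 'I_n) : pt p 0 (rshift m j) = (j == p.2)%:R.
Proof. by rewrite mxE (unsplitK (inr j : 'I_m + 'I_n)). Qed.

Lemma block_coord_gt0 a (K : idx -> 'I_a) (ck : 'I_a -> 'I_(m + n)) :
  (forall p j, pt p 0 (ck j) = (j == K p)%:R) ->
  forall p j, (0 < pt p 0 (ck j)) = (K p == j).
Proof. by move=> ptK p j; rewrite ptK ltr0n lt0b eq_sym. Qed.

Lemma comb_coord_gt0P S (lam : idx -> R) k : (forall p, 0 <= lam p) ->
  0 < (\sum_(p in S) lam p *: pt p) 0 k <->
  exists2 p, p \in S & 0 < lam p /\ 0 < pt p 0 k.
Proof.
move=> lam0; have term0 p : 0 <= lam p * pt p 0 k by rewrite mulr_ge0 ?pt_ge0.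
rewrite summxE; under eq_bigr do rewrite mxE.
split=> [pos | [p pS [lp0 pk0]]].
  have := lt0r_neq0 pos; rewrite psumr_neq0 // => /hasP[p _ /andP[pS]].
  move=> /[dup] /lt0r_neq0; rewrite mulf_eq0 negb_or => /andP[lp pk] _.
  by exists p; rewrite // !lt0r lp pk lam0 pt_ge0.
apply: lt_le_trans (mulr_gt0 lp0 pk0) _.
by rewrite (bigD1 p) //= lerDl sumr_ge0.
Qed.

Lemma barycenter_coord_ge0 S k : 0 <= barycenter S 0 k.
Proof.
rewrite summxE sumr_ge0 // => p _.
by rewrite mxE mulr_ge0 ?pt_ge0 ?invr_ge0.
Qed.

Lemma barycenter_coord_gt0P S k :
  0 < barycenter S 0 k <-> exists2 p, p \in S & 0 < pt p 0 k.
Proof.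
have inv0 (p : idx) : 0 <= (#|S|%:R^-1 : R) by rewrite invr_ge0.
split=> [/(comb_coord_gt0P _ _ inv0)[p pS [_ pk]] | [p pS pk]]; first by exists p.
apply/(comb_coord_gt0P _ _ inv0); exists p => //; split => //.
by rewrite invr_gt0 ltr0n; apply/card_gt0P; exists p.
Qed.

(* [K] and [O] stand for the two projections of [idx] (one of them onto the
   indices of Delta^(n-1), the other onto those of Delta^(m-1)), and [ck], [co]
   for the corresponding blocks of coordinates of R^(m+n). *)
Section CoordinateBlocks.
Variables (a c : nat) (K : idx -> 'I_a) (O : idx -> 'I_c).
Variables (ck : 'I_a -> 'I_(m + n)) (co : 'I_c -> 'I_(m + n)).
Hypotheses (ptK : forall p j, pt p 0 (ck j) = (j == K p)%:R)
           (ptO : forall p i, pt p 0 (co i) = (i == O p)%:R).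

Lemma triangulation_extend_adj A T s : triangulation R A T -> s \in T ->
  exists2 tau, tau \in T & s \subset tau /\ forall j,
    (exists2 q, q \in A & K q = j /\ O q \in O @: s) ->
    exists2 p, p \in tau & K p = j /\ O p \in O @: s.
Proof.
move=> hT sT; pose P := [set q in A | O q \in O @: s].
have [P0 | PP0] := eqVneq P set0.
  exists s => //; split => // j [q qA [_ qs]].
  have : q \in P by rewrite inE qA qs.
  by rewrite P0 inE.
have s0 : s != set0.
  case/set0Pn: PP0 => q; rewrite inE => /andP[_ /imsetP[q' q's _]].
  by apply/set0Pn; exists q'.
have PA : P \subset A by apply/subsetP => q; rewrite inE => /andP[].
have [tau tT [stau [t /andP[t0 t1] [lam [lam0 [_ xE]]]]]] :=
  triangulation_ray_start hT sT s0 (in_conv_subset PA (in_conv_barycenter PP0)).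
exists tau => //; split => // j [q qA [Kq Oq]].
have xk k : ((1 - t) *: barycenter s + t *: barycenter P) 0 k =
            (1 - t) * barycenter s 0 k + t * barycenter P 0 k by rewrite !mxE.
have [p ptau [lp0 pj]] : exists2 p, p \in tau & 0 < lam p /\ 0 < pt p 0 (ck j).
  apply/(comb_coord_gt0P _ _ lam0); rewrite -xE xk.
  rewrite ltr_wpDl ?mulr_ge0 ?subr_ge0 ?barycenter_coord_ge0 // mulr_gt0 //.
  apply/barycenter_coord_gt0P; exists q; first by rewrite inE qA Oq.
  by rewrite (block_coord_gt0 ptK) Kq.
exists p => //; split; first by apply/eqP; rewrite -(block_coord_gt0 ptK).
have : 0 < ((1 - t) *: barycenter s + t *: barycenter P) 0 (co (O p)).
  rewrite xE; apply/(comb_coord_gt0P _ _ lam0).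
  by exists p => //; rewrite (block_coord_gt0 ptO).
rewrite xk => xo.
have [/barycenter_coord_gt0P[r rs] | /barycenter_coord_gt0P[r]] :
    0 < barycenter s 0 (co (O p)) \/ 0 < barycenter P 0 (co (O p)).
  have [|bs0] := ltP 0 (barycenter s 0 (co (O p))); [by left | right].
  nra.
- by rewrite (block_coord_gt0 ptO) => /eqP <-; apply: imset_f.
- by rewrite inE (block_coord_gt0 ptO) => /andP[_ Ors] /eqP <-.
Qed.

End CoordinateBlocks.

End Triangulations.

Section GraphAdjacency.
Variables (m n : nat).
Implicit Types (C s : {set ('I_m * 'I_n)}).

Lemma adj_Gvert_inrP C s (j : 'I_n) :
  (exists u, Gvert s u /\ Gadj C (inr j) u) <->
  exists2 q, q \in C & q.2 = j /\ q.1 \in fst @: s.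
Proof.
split.
  case=> [[i|j'] [gv]] //= Cij; case/existsP: gv => [[//|j''] /= sij].
  by exists (i, j) => //; split => //; apply/imsetP; exists (i, j'').
case=> [[i j'] Cij [/= <- /imsetP[q qs /= iq]]].
exists (inl i); split => //; apply/existsP; exists (inr q.2).
by rewrite /= iq -surjective_pairing.
Qed.

Lemma adj_Gvert_inlP C s (i : 'I_m) :
  (exists u, Gvert s u /\ Gadj C (inl i) u) <->
  exists2 q, q \in C & q.1 = i /\ q.2 \in snd @: s.
Proof.
split.
  case=> [[i'|j] [gv]] //= Cij; case/existsP: gv => [[i''|//] /= sij].
  by exists (i, j) => //; split => //; apply/imsetP; exists (i'', j).
case=> [[i' j] Cij [/= <- /imsetP[q qs /= jq]]].
exists (inr j); split => //; apply/existsP; exists (inl q.1).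
by rewrite /= jq -surjective_pairing.
Qed.

End GraphAdjacency.

Theorem proposition6p2 (R : realFieldType) (m n : nat)
  (A : {set ('I_m * 'I_n)}) (T : {set {set ('I_m * 'I_n)}})
  (s : {set ('I_m * 'I_n)}) :
  triangulation R A T -> s \in T ->
  (exists2 t, t \in T &
     s \subset t /\
     forall j : 'I_n,
       (exists u, Gvert s u /\ Gadj A (inr j) u) ->
       (exists u, Gvert s u /\ Gadj t (inr j) u)) /\
  (exists2 t, t \in T &
     s \subset t /\
     forall i : 'I_m,
       (exists u, Gvert s u /\ Gadj A (inl i) u) ->
       (exists u, Gvert s u /\ Gadj t (inl i) u)).
Proof.
move=> hT sT; split.
  have [tau tT [stau adj]] :=
    triangulation_extend_adj (@pt_rshift R m n) (@pt_lshift R m n) hT sT.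
  by exists tau => //; split => // j /adj_Gvert_inrP /adj /adj_Gvert_inrP.
have [tau tT [stau adj]] :=
  triangulation_extend_adj (@pt_lshift R m n) (@pt_rshift R m n) hT sT.
by exists tau => //; split => // i /adj_Gvert_inlP /adj /adj_Gvert_inlP.
Qed.
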